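(* Let $P_1,\dots,P_\ell$ and $P'_1,\dots,P'_\ell$ be transition matrices on the finite set $S$, all reversible with respect to $\pi$ (not necessarily irreducible). Let $a_1,\dots,a_\ell>0$ with $\sum_k a_k=1$, and set $P=\sum_{k=1}^\ell a_kP_k$ and $P'=\sum_{k=1}^\ell a_kP'_k$. If $P$ and $P'$ are irreducible, and for each $k$ the eigenvalues of $P_k-P'_k$ (equivalently, of $D(P_k-P'_k)$ with $D=\mathrm{diag}(\pi)$) are all non-negative, then $P'$ efficiency-dominates $P$.
   Context: $S$ is a finite set with $|S|=n$, identified with $\{1,\dots,n\}$, and $\pi$ is a probability distribution on $S$ with $\pi(x)>0$ for all $x$; $D=\mathrm{diag}(\pi(1),\dots,\pi(n))$. A transition matrix $P$ is reversible with respect to $\pi$ if $\pi(x)P(x,y)=\pi(y)P(y,x)$ for all $x,y$; irreducible if every state can be reached from every other with positive probability in some number of steps. For a Markov chain $X_1,X_2,\dots$ with transition matrix $P$ and $X_1\sim\pi$, $v(f,P)=\lim_{N\to\infty}\frac1N\mathrm{Var}\big(\sum_{i=1}^N f(X_i)\big)$. $P$ efficiency-dominates $Q$ if $v(f,P)\le v(f,Q)$ for all $f:S\to\mathbb R$. *)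

From HB Require Import structures.
From mathcomp Require Import all_boot all_order all_algebra.
From mathcomp Require Import all_classical all_reals topology normedtype sequences.
Set Implicit Arguments. Unset Strict Implicit. Unset Printing Implicit Defensive.
Import Order.TTheory GRing.Theory Num.Theory numFieldNormedType.Exports.
Local Open Scope ring_scope.

Section Markov.
Variable R : realType.
Variable n : nat.

Definition is_pos_distribution (pi : 'I_n -> R) : Prop :=
  (forall x, 0 < pi x) /\ \sum_(x < n) pi x = 1.

Definition is_transition (P : 'M[R]_n) : Prop :=
  (forall x y, 0 <= P x y) /\ (forall x, \sum_(y < n) P x y = 1).

Definition reversible (pi : 'I_n -> R) (P : 'M[R]_n) : Prop :=
  forall x y, pi x * P x y = pi y * P y x.

Definition irreducible (P : 'M[R]_n) : Prop :=
  forall x y, exists k : nat, 0 < (P ^+ k) x y.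

(* Law of the path (X_1, ..., X_{N+1}) of the chain started from pi. *)
Definition path_weight (pi : 'I_n -> R) (P : 'M[R]_n) (N : nat)
  (x : {ffun 'I_N.+1 -> 'I_n}) : R :=
  pi (x ord0) * \prod_(i < N) P (x (inord i)) (x (inord i.+1)).

Definition path_expect (pi : 'I_n -> R) (P : 'M[R]_n) (N : nat)
  (g : {ffun 'I_N.+1 -> 'I_n} -> R) : R :=
  \sum_(x : {ffun 'I_N.+1 -> 'I_n}) path_weight pi P x * g x.

Definition path_sum (f : 'I_n -> R) (N : nat) (x : {ffun 'I_N.+1 -> 'I_n}) : R :=
  \sum_(i < N.+1) f (x i).

Definition var_sum (pi : 'I_n -> R) (P : 'M[R]_n) (f : 'I_n -> R) (N : nat) : R :=
  path_expect pi P (fun x : {ffun 'I_N.+1 -> 'I_n} => path_sum f x ^+ 2)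
  - (path_expect pi P (fun x : {ffun 'I_N.+1 -> 'I_n} => path_sum f x)) ^+ 2.

(* v(f,P) = lim_{N -> oo} (1/N) Var(sum_{i=1}^N f(X_i))
   (sequence indexed from N+1 = 1, which does not change the limit). *)
Definition asym_var (pi : 'I_n -> R) (f : 'I_n -> R) (P : 'M[R]_n) : R :=
  limn (fun N : nat => var_sum pi P f N / N.+1%:R).

Definition efficiency_dominates (pi : 'I_n -> R) (P Q : 'M[R]_n) : Prop :=
  forall f : 'I_n -> R, asym_var pi f P <= asym_var pi f Q.

End Markov.

From HB Require Import structures.
From mathcomp Require Import all_boot all_order all_algebra.
From mathcomp Require Import all_classical all_reals topology normedtype sequences.
From mathcomp Require Import ring lra zify.
From mathcomp Require Import sesquilinear spectral.
From mathcomp.real_closed Require Import complex.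
Set Implicit Arguments. Unset Strict Implicit. Unset Printing Implicit Defensive.
Import Order.TTheory GRing.Theory Num.Theory numFieldNormedType.Exports.
Local Open Scope ring_scope.

(* Write <u, v> for the inner product of L^2(pi) and E_P(h) = <h, (I - P) h>
   for the Dirichlet form of P.  For f centred under pi and P irreducible and
   reversible, the Poisson equation g - P g = f is solvable, and the Markov
   property turns Var(f(X_1) + ... + f(X_N)) into N (2 <g, f> - <f, f>) + O(1),
   so v(f, P) = 2 <g, f> - <f, f>.  Positivity of E_P on g - g' gives
   <g, f> = E_P(g) >= 2 <g', f> - E_P(g').  Each P_k - P'_k is self-adjoint on
   L^2(pi) with non-negative spectrum, hence so is P - P', i.e. E_P <= E_P';
   thus E_P(g') <= E_P'(g') = <g', f> and <g', f> <= <g, f>. *)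

Lemma spectral_diag_eigenvalue (C : numClosedFieldType) n (A : 'M[C]_n) i :
  A \is normalmx -> eigenvalue A (spectral_diag A 0 i).
Proof.
move=> /orthomx_spectralP eA; set P := spectralmx A.
have Pu : P \in unitmx := spectral_unit A.
apply/eigenvalueP; exists (row i P).
  by rewrite {1}eA rowE !mulmxA mulmxK // -(rowE i (diag_mx _)) row_diag_mx scalemxAl.
apply/negP => /eqP rowi0.
have : row i P *m invmx P = 0 by rewrite rowi0 mul0mx.
rewrite rowE mulmxK // => /matrixP /(_ 0 i); rewrite !mxE !eqxx /= => /eqP.
by rewrite oner_eq0.
Qed.

Lemma hermmx_psd (C : numClosedFieldType) n (A : 'M[C]_n) : A \is hermsymmx ->
  (forall d, d \is Num.real -> eigenvalue A d -> 0 <= d) ->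
  forall v : 'rV_n, 0 <= (v *m A *m map_mx Num.conj v^T) 0 0.
Proof.
move=> hA eig_ge0 v; have nA := hermitian_normalmx hA.
set P := spectralmx A; set d := spectral_diag A.
have d_ge0 i : 0 <= d 0 i.
  apply: (eig_ge0 _ _ (spectral_diag_eigenvalue i nA)).
  by move/mxOverP: (hermitian_spectral_diag_real hA); apply.
have /orthomx_spectralP eA := nA.
rewrite {1}eA invmx_unitary ?spectral_unitarymx //.
set w := v *m map_mx Num.conj P^T.
have Pv : P *m map_mx Num.conj v^T = map_mx Num.conj w^T.
  rewrite /w trmx_mul map_mxM; congr (_ *m _).
  by rewrite -map_trmx trmxK -map_mx_comp (map_mx_id (@conjCK _)).
rewrite !mulmxA -(mulmxA _ P) Pv mul_mx_diag !mxE sumr_ge0 // => j _.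
by rewrite !mxE mulrAC mulr_ge0 // mul_conjC_ge0.
Qed.

Lemma symmx_psd (R : rcfType) n (S : 'M[R]_n) : S^T = S ->
  (forall lam, eigenvalue S lam -> 0 <= lam) ->
  forall v : 'rV_n, 0 <= (v *m S *m v^T) 0 0.
Proof.
move=> sS eig_ge0 v; pose f := real_complex R.
have conj_f (x : R) : Num.conj (f x) = f x.
  by apply: conj_Creal; rewrite /f complex_real.
have conj_map m p (M : 'M[R]_(m, p)) : map_mx Num.conj (map_mx f M) = map_mx f M.
  by apply/matrixP => i j; rewrite !mxE conj_f.
have hS : map_mx f S \is hermsymmx.
  by apply/is_hermitianmxP; rewrite expr0 scale1r map_trmx conj_map sS.
have eig_fS d : d \is Num.real -> eigenvalue (map_mx f S) d -> 0 <= d.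
  by move=> /complex_realP [k ->]; rewrite (eigenvalue_map f) ler0c; apply: eig_ge0.
have := hermmx_psd hS eig_fS (map_mx f v).
by rewrite map_trmx conj_map -!map_mxM mxE ler0c.
Qed.

Section Limit.
Local Open Scope classical_set_scope.

Lemma limn_eq_of_dist_le_inv (R : realType) (u : nat -> R) V C :
  (forall N, `|u N - V| <= C / N.+1%:R) -> limn u = V.
Proof.
move=> hb; apply: cvg_lim; first exact: norm_hausdorff.
have CH0 : (fun N => C * harmonic N) @ \oo --> (0 : R).
  by rewrite -(mulr0 C); apply: cvgM; [exact: cvg_cst | exact: cvg_harmonic].
have lo : (fun N => V - C * harmonic N) @ \oo --> V.
  by rewrite -[X in _ --> X]subr0; apply: cvgB => //; exact: cvg_cst.
have hi : (fun N => V + C * harmonic N) @ \oo --> V.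
  by rewrite -[X in _ --> X]addr0; apply: cvgD => //; exact: cvg_cst.
apply: (squeeze_cvgr _ lo hi); apply: nearW => N.
by have := hb N; rewrite ler_distl.
Qed.

End Limit.

Section PiInnerProduct.
Variables (R : realType) (n : nat) (pi : 'I_n -> R).

Definition dotpi (u v : 'I_n -> R) := \sum_(x < n) pi x * u x * v x.
Definition mxact (P : 'M[R]_n) (h : 'I_n -> R) x := \sum_(y < n) P x y * h y.
Definition dirichlet (P : 'M[R]_n) h := dotpi h (fun x => h x - mxact P h x).

Lemma dotpiC u v : dotpi u v = dotpi v u.
Proof. by apply: eq_bigr => x _; ring. Qed.

Lemma eq_dotpi u u' v v' : u =1 u' -> v =1 v' -> dotpi u v = dotpi u' v'.
Proof. by move=> eu ev; apply: eq_bigr => x _; rewrite eu ev. Qed.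

Lemma dotpiBl u v w : dotpi (fun x => u x - v x) w = dotpi u w - dotpi v w.
Proof. by rewrite /dotpi -sumrB; apply: eq_bigr => x _; ring. Qed.

Lemma dotpiBr u v w : dotpi w (fun x => u x - v x) = dotpi w u - dotpi w v.
Proof. by rewrite dotpiC dotpiBl ![dotpi _ w]dotpiC. Qed.

Lemma mxactBr P u v :
  mxact P (fun x => u x - v x) =1 fun x => mxact P u x - mxact P v x.
Proof. by move=> x; rewrite /mxact -sumrB; apply: eq_bigr => y _; ring. Qed.

Lemma mxactBl (P Q : 'M[R]_n) h x :
  mxact (P - Q) h x = mxact P h x - mxact Q h x.
Proof. by rewrite /mxact -sumrB; apply: eq_bigr => y _; rewrite !mxE; ring. Qed.

Lemma dirichlet_sub P Q h :
  dirichlet Q h - dirichlet P h = dotpi h (mxact (P - Q) h).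
Proof.
have -> : dotpi h (mxact (P - Q) h) = dotpi h (mxact P h) - dotpi h (mxact Q h).
  by rewrite -dotpiBr; apply: eq_dotpi => // x; rewrite mxactBl.
rewrite /dirichlet !dotpiBr; ring.
Qed.

Lemma sum_pi_centred (f : 'I_n -> R) : \sum_(x < n) pi x = 1 ->
  \sum_(x < n) pi x * (f x - \sum_(y < n) pi y * f y) = 0.
Proof.
move=> pisum; under eq_bigr => x _ do rewrite mulrBr.
by rewrite sumrB -mulr_suml pisum mul1r subrr.
Qed.

End PiInnerProduct.

Section Transition.
Variables (R : realType) (n : nat) (P : 'M[R]_n).

Lemma mxact_pow_fixed h k : mxact P h =1 h -> mxact (P ^+ k) h =1 h.
Proof.
move=> hfix; elim: k => [|k IH] x.
  rewrite /mxact expr0 (bigD1 x) //= big1 ?mxE ?eqxx ?addr0 ?mul1r // => y.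
  by rewrite mxE eq_sym => /negPf ->; rewrite mul0r.
rewrite /mxact exprS -mulmxE.
under eq_bigr => y _ do rewrite mxE mulr_suml.
rewrite exchange_big /= -(hfix x); apply: eq_bigr => z _.
by rewrite -(IH z) /mxact mulr_sumr; apply: eq_bigr => i _; rewrite mulrA.
Qed.

Hypothesis Pt : is_transition P.

Lemma transition_ge0 x y : 0 <= P x y. Proof. by case: Pt. Qed.

Lemma transition_sum1 x : \sum_(y < n) P x y = 1. Proof. by case: Pt. Qed.

Lemma mxact_cst c : mxact P (fun=> c) =1 fun=> c.
Proof. by move=> x; rewrite /mxact -mulr_suml transition_sum1 mul1r. Qed.

Lemma transition_pow k : is_transition (P ^+ k).
Proof.
elim: k => [|k [IH_ge0 IH_sum1]].
  rewrite expr0; split=> [x y|x]; first by rewrite mxE ler0n.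
  rewrite (bigD1 x) //= big1 ?mxE ?eqxx ?addr0 // => y.
  by rewrite mxE eq_sym => /negPf ->.
rewrite exprS -mulmxE; split=> [x y|x].
  by rewrite mxE sumr_ge0 // => z _; rewrite mulr_ge0 ?transition_ge0.
under eq_bigr => y _ do rewrite mxE.
rewrite exchange_big /=.
under eq_bigr => z _ do rewrite -mulr_sumr IH_sum1 mulr1.
exact: transition_sum1.
Qed.

(* A maximum of a harmonic function propagates along every positive entry of
   a power of P, hence everywhere. *)
Lemma irreducible_harmonic_cst h : irreducible P -> mxact P h =1 h ->
  forall x y, h x = h y.
Proof.
move=> irr hfix x.
case: (@arg_maxP _ _ _ x xpredT h isT) => x0 _ hmax.
suff h_x0 y : h y = h x0 by move=> y; rewrite !h_x0.
have [k Pk_pos] := irr x0 y; have [Pk_ge0 Pk_sum1] := transition_pow k.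
have avg0 : \sum_(z < n) (P ^+ k) x0 z * (h x0 - h z) = 0.
  under eq_bigr => z _ do rewrite mulrBr.
  rewrite sumrB -mulr_suml Pk_sum1 mul1r.
  by have := mxact_pow_fixed k hfix x0; rewrite /mxact => ->; rewrite subrr.
have /psumr_eq0P term0 : forall z, true -> 0 <= (P ^+ k) x0 z * (h x0 - h z).
  by move=> z _; rewrite mulr_ge0 // subr_ge0; apply: hmax.
move/eqP: (term0 avg0 y isT); rewrite mulf_eq0 (gt_eqF Pk_pos) /= subr_eq0.
by move/eqP.
Qed.

End Transition.

Section Reversible.
Variables (R : realType) (n : nat) (pi : 'I_n -> R) (P : 'M[R]_n).
Hypotheses (Pt : is_transition P) (Pr : reversible pi P).

Lemma reversible_stationary y : \sum_(x < n) pi x * P x y = pi y.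
Proof.
under eq_bigr => x _ do rewrite Pr.
by rewrite -mulr_sumr transition_sum1 // mulr1.
Qed.

Lemma sum_pi_mxact h : \sum_(x < n) pi x * mxact P h x = \sum_(x < n) pi x * h x.
Proof.
rewrite /mxact; under eq_bigr => x _ do rewrite mulr_sumr.
rewrite exchange_big /=; apply: eq_bigr => y _.
by rewrite -(reversible_stationary y) mulr_suml; apply: eq_bigr => x _; ring.
Qed.

Lemma dotpi_mxactC u v : dotpi pi (mxact P u) v = dotpi pi u (mxact P v).
Proof.
rewrite /dotpi /mxact.
transitivity (\sum_(x < n) \sum_(y < n) pi y * P y x * u y * v x).
  apply: eq_bigr => x _; rewrite mulr_sumr mulr_suml; apply: eq_bigr => y _.
  by rewrite -Pr; ring.
rewrite exchange_big; apply: eq_bigr => y _ /=.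
by rewrite mulr_sumr; apply: eq_bigr => x _; ring.
Qed.

Lemma dirichletB u v : dirichlet pi P (fun x => u x - v x) =
  dirichlet pi P u - 2 * dotpi pi v (fun x => u x - mxact P u x) + dirichlet pi P v.
Proof.
have Puv : dotpi pi v (mxact P u) = dotpi pi u (mxact P v).
  by rewrite dotpiC dotpi_mxactC.
have -> : dirichlet pi P (fun x => u x - v x) = dotpi pi (fun x => u x - v x)
    (fun x => (u x - mxact P u x) - (v x - mxact P v x)).
  by apply: eq_dotpi => // x; rewrite mxactBr; ring.
rewrite /dirichlet !(dotpiBl, dotpiBr) Puv (dotpiC pi v u); ring.
Qed.

Lemma dirichlet_form h : \sum_(x < n) \sum_(y < n) pi x * P x y * (h x - h y) ^+ 2
  = 2 * dirichlet pi P h.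
Proof.
have sqr_x : \sum_(x < n) \sum_(y < n) pi x * P x y * h x ^+ 2 = dotpi pi h h.
  by apply: eq_bigr => x _; rewrite -mulr_suml -mulr_sumr transition_sum1 //; ring.
have sqr_y : \sum_(x < n) \sum_(y < n) pi x * P x y * h y ^+ 2 = dotpi pi h h.
  rewrite exchange_big; apply: eq_bigr => y _ /=.
  by rewrite -mulr_suml reversible_stationary; ring.
have cross : \sum_(x < n) \sum_(y < n) pi x * P x y * (h x * h y)
    = dotpi pi h (mxact P h).
  by apply: eq_bigr => x _; rewrite mulr_sumr; apply: eq_bigr => y _; ring.
rewrite /dirichlet dotpiBr mulrBr mulr_natl mulr2n -{1}sqr_x -sqr_y -cross.
rewrite -big_split /= mulr_sumr -sumrB; apply: eq_bigr => x _.
by rewrite -big_split /= mulr_sumr -sumrB; apply: eq_bigr => y _; ring.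
Qed.

Hypothesis pipos : forall x, 0 < pi x.

Lemma dirichlet_ge0 h : 0 <= dirichlet pi P h.
Proof.
rewrite -(pmulr_rge0 _ (ltr0Sn R 1)) -dirichlet_form.
apply: sumr_ge0 => x _; apply: sumr_ge0 => y _.
by rewrite mulr_ge0 ?sqr_ge0 // mulr_ge0 ?transition_ge0 // ltW.
Qed.

Lemma pi_neq0 x : pi x != 0. Proof. by rewrite gt_eqF. Qed.

Lemma reversible_div x y : P y x / pi x = P x y / pi y.
Proof.
apply: (mulfI (pi_neq0 y)); rewrite mulrA Pr.
by field; rewrite !pi_neq0.
Qed.

Lemma left_fixed_proportional (r : 'rV[R]_n) x0 : irreducible P -> r *m P = r ->
  r = (r 0 x0 / pi x0) *: \row_x pi x.
Proof.
move=> irr rP; pose h x := r 0 x / pi x.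
have rfix y : \sum_(x < n) r 0 x * P x y = r 0 y.
  by have /matrixP /(_ 0 y) := rP; rewrite mxE.
have hfix : mxact P h =1 h.
  move=> x; rewrite /mxact /h -rfix mulr_suml; apply: eq_bigr => y _.
  by rewrite mulrA [P x y * _]mulrC -mulrA reversible_div mulrA.
apply/rowP => y; rewrite !mxE -/(h x0) (irreducible_harmonic_cst Pt irr hfix x0 y).
by rewrite /h divfK ?pi_neq0.
Qed.

Hypothesis pisum : \sum_(x < n) pi x = 1.

Lemma states_gt0 : (0 < n)%N.
Proof.
case: (pickP (fun _ : 'I_n => true)) => [x _|none]; first exact: leq_ltn_trans (ltn_ord x).
move: pisum; rewrite big1 => [/eqP|x]; first by rewrite eq_sym oner_eq0.
by have := none x.
Qed.

Lemma irreducible_rank_kermx_le1 : irreducible P -> (\rank (kermx (1%:M - P)) <= 1)%N.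
Proof.
move=> irr.
suff ker_pi : (kermx (1%:M - P) <= \row_x pi x)%MS.
  exact: leq_trans (mxrankS ker_pi) (rank_leq_row _).
apply/row_subP => i; set r := row i (kermx (1%:M - P)).
have rP : r *m P = r.
  have : r *m (1%:M - P) = 0 by rewrite /r -row_mul mulmx_ker row0.
  by rewrite mulmxBr mulmx1 => /eqP; rewrite subr_eq0 => /eqP <-.
by rewrite (left_fixed_proportional (Ordinal states_gt0) irr rP) scalemx_sub.
Qed.

Lemma centred_sub_rowspace (w : 'rV[R]_n) : irreducible P ->
  w *m (const_mx 1 : 'cV_n) = 0 -> (w <= 1%:M - P)%MS.
Proof.
move=> irr w1; set M := 1%:M - P; set ones : 'M[R]_(n, 1) := const_mx 1.
have M1 : M *m ones = 0.
  apply/matrixP => i j; rewrite mulmxBl mul1mx !mxE.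
  under eq_bigr => k _ do rewrite mxE mulr1.
  by rewrite transition_sum1 // subrr.
have M_ker : (M <= kermx ones)%MS by apply/sub_kermxP.
have rk_ones : (1 <= \rank ones)%N.
  rewrite lt0n mxrank_eq0; apply/eqP => /matrixP /(_ (Ordinal states_gt0) 0).
  by rewrite !mxE => /eqP; rewrite oner_eq0.
have rk_M : (\rank (kermx ones) <= \rank M)%N.
  move: (irreducible_rank_kermx_le1 irr) (rank_leq_row M); rewrite !mxrank_ker -/M; lia.
have ker_M : (kermx ones <= M)%MS.
  by rewrite -(mxrank_leqif_sup M_ker).2 eqn_leq rk_M mxrankS.
by apply: submx_trans ker_M; apply/sub_kermxP.
Qed.

Lemma poisson_solution f : irreducible P -> \sum_(x < n) pi x * f x = 0 ->
  exists g, forall x, g x - mxact P g x = f x.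
Proof.
move=> irr f0; pose w := \row_x (pi x * f x).
have w1 : w *m (const_mx 1 : 'cV_n) = 0.
  apply/matrixP => i j; rewrite !mxE -[RHS]f0.
  by apply: eq_bigr => k _; rewrite !mxE mulr1.
have /submxP [u wu] := centred_sub_rowspace irr w1.
exists (fun x => u 0 x / pi x) => y.
have := congr1 (fun A : 'rV[R]_n => A 0 y) wu.
rewrite mulmxBr mulmx1 !mxE => e; rewrite /mxact.
have -> : \sum_(x < n) P y x * (u 0 x / pi x) = (\sum_(x < n) u 0 x * P x y) / pi y.
  rewrite mulr_suml; apply: eq_bigr => x _.
  by rewrite mulrA [P y x * _]mulrC -mulrA reversible_div mulrA.
by rewrite -mulrBl -e mulrAC divff ?mul1r ?pi_neq0.
Qed.

End Reversible.

Section PathMoments.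
Variables (R : realType) (n : nat) (pi : 'I_n -> R) (P : 'M[R]_n).
Local Notation traj N := {ffun 'I_N.+1 -> 'I_n}.

Definition snoc_traj N (x : traj N) (y : 'I_n) : traj N.+1 :=
  [ffun i => if unlift ord_max i is Some j then x j else y].

Lemma snoc_traj_last N x y : @snoc_traj N x y ord_max = y.
Proof. by rewrite ffunE unlift_none. Qed.

Lemma snoc_traj_lt N x y (i : 'I_N.+2) : (i < N.+1)%N ->
  @snoc_traj N x y i = x (inord i).
Proof.
move=> lt_iN; rewrite ffunE; case: unliftP => [j ->|e].
  by rewrite lift_max inord_val.
by move: lt_iN; rewrite e /= ltnn.
Qed.

Lemma sum_traj0 (F : traj 0 -> R) : \sum_x F x = \sum_(y < n) F [ffun=> y].
Proof.
rewrite (reindex (fun y : 'I_n => [ffun=> y])) //.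
exists (fun x : traj 0 => x ord0) => [y _|x _]; first by rewrite ffunE.
by apply/ffunP => i; rewrite ffunE (ord1 i).
Qed.

Lemma sum_trajS N (F : traj N.+1 -> R) :
  \sum_z F z = \sum_(x : traj N) \sum_(y < n) F (snoc_traj x y).
Proof.
rewrite pair_big /= (reindex (fun p : traj N * 'I_n => snoc_traj p.1 p.2)) //.
exists (fun z : traj N.+1 => ([ffun j => z (lift ord_max j)], z ord_max)) => [[x y] _|z _] /=.
  by rewrite snoc_traj_last; congr (_, _); apply/ffunP => j; rewrite !ffunE liftK.
apply/ffunP => i; rewrite ffunE; case: unliftP => [j ->|->] //.
by rewrite ffunE.
Qed.

Lemma path_weight_snoc N x y :
  path_weight pi P (@snoc_traj N x y) = path_weight pi P x * P (x ord_max) y.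
Proof.
rewrite /path_weight big_ord_recr /= mulrA; congr (_ * _ * _).
- by rewrite snoc_traj_lt //; congr (pi (x _)); apply: val_inj; rewrite /= inordK.
- apply: eq_bigr => i _; have lt_iN := ltn_ord i.
  by rewrite !snoc_traj_lt ?inordK //; lia.
- have -> : (inord N.+1 : 'I_N.+2) = ord_max by apply: val_inj; rewrite /= inordK.
  rewrite snoc_traj_last snoc_traj_lt ?inordK //; congr (P (x _) _).
  by apply: val_inj; rewrite /= !inordK.
Qed.

Lemma path_sum_snoc (f : 'I_n -> R) N x y :
  path_sum f (@snoc_traj N x y) = path_sum f x + f y.
Proof.
rewrite /path_sum big_ord_recr /= snoc_traj_last; congr (_ + _).
apply: eq_bigr => i _; rewrite snoc_traj_lt /=; last exact: ltn_ord.
by congr (f (x _)); apply: val_inj; rewrite /= inordK.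
Qed.

Lemma path_expect0 (G : traj 0 -> R) : path_expect pi P G = \sum_(y < n) pi y * G [ffun=> y].
Proof.
rewrite /path_expect sum_traj0; apply: eq_bigr => y _.
by rewrite /path_weight big_ord0 mulr1 ffunE.
Qed.

Lemma path_expectS N (G : traj N.+1 -> R) : path_expect pi P G =
  \sum_x path_weight pi P x * \sum_(y < n) P (x ord_max) y * G (snoc_traj x y).
Proof.
rewrite /path_expect sum_trajS; apply: eq_bigr => x _.
by rewrite mulr_sumr; apply: eq_bigr => y _; rewrite path_weight_snoc; ring.
Qed.

Lemma eq_path_expect N (G H : traj N -> R) : G =1 H ->
  path_expect pi P G = path_expect pi P H.
Proof. by move=> e; apply: eq_bigr => x _; rewrite e. Qed.

Lemma path_expectD N (G H : traj N -> R) :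
  path_expect pi P (fun x => G x + H x) = path_expect pi P G + path_expect pi P H.
Proof. by rewrite /path_expect -big_split; apply: eq_bigr => x _ /=; ring. Qed.

Lemma path_expectZ N c (G : traj N -> R) :
  path_expect pi P (fun x => c * G x) = c * path_expect pi P G.
Proof. by rewrite /path_expect mulr_sumr; apply: eq_bigr => x _ /=; ring. Qed.

Hypotheses (Pt : is_transition P) (Pr : reversible pi P).

Lemma path_expect_last N h :
  path_expect pi P (fun x : traj N => h (x ord_max)) = \sum_(y < n) pi y * h y.
Proof.
elim: N h => [|N IH] h.
  by rewrite path_expect0; apply: eq_bigr => y _; rewrite ffunE.
rewrite path_expectS.
transitivity (path_expect pi P (fun x : traj N => mxact P h (x ord_max))).
  apply: eq_bigr => x _; congr (_ * _).
  by apply: eq_bigr => y _; rewrite snoc_traj_last.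
by rewrite IH sum_pi_mxact.
Qed.

Hypothesis pisum : \sum_(x < n) pi x = 1.

Lemma path_expect1 N : path_expect pi P (fun _ : traj N => 1) = 1.
Proof.
rewrite (path_expect_last N (fun=> 1)) -[RHS]pisum.
by apply: eq_bigr => y _; rewrite mulr1.
Qed.

Lemma var_sum_shift f m N : var_sum pi P (fun x => f x - m) N = var_sum pi P f N.
Proof.
set c := N.+1%:R * m.
have shift (x : traj N) : path_sum (fun y => f y - m) x = path_sum f x - c.
  by rewrite /path_sum sumrB sumr_const card_ord /c mulr_natl.
rewrite /var_sum (eq_path_expect
  (H := fun x => path_sum f x ^+ 2 + (-2 * c) * path_sum f x + c ^+ 2 * 1)); last first.
  by move=> x; rewrite shift; ring.
rewrite (eq_path_expect (G := fun x => path_sum (fun y => f y - m) x)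
  (H := fun x => path_sum f x + - c * 1)); last by move=> x; rewrite shift; ring.
by rewrite !path_expectD !path_expectZ !path_expect1; ring.
Qed.

Lemma asym_var_shift f m : asym_var pi (fun x => f x - m) P = asym_var pi f P.
Proof. by rewrite /asym_var; congr (limn _); apply/funext => N; rewrite var_sum_shift. Qed.

Variable f : 'I_n -> R.

Definition cross_moment N h :=
  path_expect pi P (fun x : traj N => path_sum f x * h (x ord_max)).
Definition second_moment N := path_expect pi P (fun x : traj N => path_sum f x ^+ 2).

Lemma cross_moment0 h : cross_moment 0 h = dotpi pi f h.
Proof.
rewrite /cross_moment path_expect0; apply: eq_bigr => y _.
by rewrite /path_sum big_ord1 !ffunE; ring.
Qed.

Lemma cross_momentS N h :
  cross_moment N.+1 h = cross_moment N (mxact P h) + dotpi pi f h.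
Proof.
rewrite /cross_moment path_expectS.
transitivity (path_expect pi P (fun x : traj N =>
  path_sum f x * mxact P h (x ord_max) + mxact P (fun z => f z * h z) (x ord_max))).
  apply: eq_bigr => x _; congr (_ * _).
  rewrite /mxact mulr_sumr -big_split /=; apply: eq_bigr => y _.
  by rewrite path_sum_snoc snoc_traj_last; ring.
rewrite path_expectD path_expect_last sum_pi_mxact //; congr (_ + _).
by apply: eq_bigr => x _; rewrite mulrA.
Qed.

Lemma second_moment0 : second_moment 0 = dotpi pi f f.
Proof.
rewrite /second_moment path_expect0; apply: eq_bigr => y _.
by rewrite /path_sum big_ord1 !ffunE; ring.
Qed.

Lemma second_momentS N : second_moment N.+1 =
  second_moment N + 2 * cross_moment N (mxact P f) + dotpi pi f f.
Proof.
rewrite /second_moment path_expectS.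
transitivity (path_expect pi P (fun x : traj N => path_sum f x ^+ 2
  + 2 * (path_sum f x * mxact P f (x ord_max)) + mxact P (fun z => f z * f z) (x ord_max))).
  apply: eq_bigr => x _; congr (_ * _); rewrite /mxact.
  transitivity (\sum_(y < n) (path_sum f x ^+ 2 * P (x ord_max) y
    + 2 * (path_sum f x * (P (x ord_max) y * f y)) + P (x ord_max) y * (f y * f y))).
    by apply: eq_bigr => y _; rewrite path_sum_snoc; ring.
  by rewrite !big_split /= -mulr_sumr transition_sum1 // -!mulr_sumr mulr1.
rewrite !path_expectD path_expectZ path_expect_last sum_pi_mxact //.
by congr (_ + _); apply: eq_bigr => x _; rewrite mulrA.
Qed.

Lemma var_sum_centred N : \sum_(x < n) pi x * f x = 0 -> var_sum pi P f N = second_moment N.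
Proof.
move=> f0; have cross1 k : cross_moment k (fun=> 1) = 0.
  have f1 : dotpi pi f (fun=> 1) = 0.
    by rewrite -[RHS]f0; apply: eq_bigr => x _; rewrite mulr1.
  elim: k => [|k IH]; first by rewrite cross_moment0.
  rewrite cross_momentS f1 addr0 -[RHS]IH.
  by apply: eq_path_expect => x; rewrite mxact_cst.
rewrite /var_sum (_ : path_expect pi P (fun x : traj N => path_sum f x) = 0).
  by rewrite expr0n /= subr0.
by rewrite -(cross1 N); apply: eq_path_expect => x; rewrite mulr1.
Qed.

Section PoissonSolution.
Variable g : 'I_n -> R.
Hypothesis hg : forall x, g x - mxact P g x = f x.

Definition autocov k := dotpi pi (iter k (mxact P) g) g.

Lemma cross_moment_poisson N h :
  cross_moment N h = dotpi pi g h - dotpi pi (iter N.+1 (mxact P) g) h.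
Proof.
elim: N h => [|N IH] h.
  by rewrite cross_moment0 -dotpiBl; apply: eq_dotpi => // x; rewrite hg.
rewrite cross_momentS IH -dotpi_mxactC //.
have -> : dotpi pi (iter N.+1 (mxact P) g) (mxact P h)
    = dotpi pi (iter N.+2 (mxact P) g) h by rewrite -dotpi_mxactC.
have -> : dotpi pi f h = dotpi pi g h - dotpi pi (mxact P g) h.
  by rewrite -dotpiBl; apply: eq_dotpi => // x; rewrite hg.
ring.
Qed.

Lemma second_moment_poisson N : second_moment N = N%:R * (2 * dotpi pi g f - dotpi pi f f)
  + dotpi pi f f - 2 * autocov 2 + 2 * autocov N.+2.
Proof.
elim: N => [|N IH]; first by rewrite second_moment0; ring.
rewrite second_momentS IH cross_moment_poisson.
have -> : dotpi pi g (mxact P f) = dotpi pi g f - dotpi pi f f.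
  rewrite -dotpi_mxactC // -dotpiBl; apply: eq_dotpi => // x.
  by rewrite -hg; ring.
have -> : dotpi pi (iter N.+1 (mxact P) g) (mxact P f) = autocov N.+2 - autocov N.+3.
  rewrite -dotpi_mxactC // /autocov.
  have -> : dotpi pi (iter N.+3 (mxact P) g) g
      = dotpi pi (iter N.+2 (mxact P) g) (mxact P g) by rewrite -dotpi_mxactC.
  by rewrite -dotpiBr; apply: eq_dotpi => // x; rewrite hg.
by rewrite -[N.+1]addn1 natrD; ring.
Qed.

Lemma iter_mxact_bound k x : `|iter k (mxact P) g x| <= \sum_(y < n) `|g y|.
Proof.
elim: k x => [|k IH] x; first by rewrite (bigD1 x) //= lerDl sumr_ge0.
apply: le_trans (ler_norm_sum _ _ _) _.
apply: (@le_trans _ _ (\sum_(y < n) P x y * \sum_(y < n) `|g y|)).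
  apply: ler_sum => y _; rewrite normrM ger0_norm ?transition_ge0 //.
  by apply: ler_wpM2l; [exact: transition_ge0 | exact: IH].
by rewrite -mulr_suml transition_sum1 // mul1r.
Qed.

Hypothesis pipos : forall x, 0 < pi x.

Lemma autocov_bound k : `|autocov k| <= (\sum_(y < n) `|g y|) ^+ 2.
Proof.
apply: le_trans (ler_norm_sum _ _ _) _.
apply: (@le_trans _ _ (\sum_(x < n) pi x * (\sum_(y < n) `|g y|) ^+ 2)).
  apply: ler_sum => x _; rewrite !normrM (ger0_norm (ltW (pipos x))) -mulrA.
  apply: ler_wpM2l; first exact: ltW.
  by rewrite expr2; apply: ler_pM => //; [exact: iter_mxact_bound | exact: (iter_mxact_bound 0)].
by rewrite -mulr_suml pisum mul1r.
Qed.

Lemma asym_var_poisson : \sum_(x < n) pi x * f x = 0 ->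
  asym_var pi f P = 2 * dotpi pi g f - dotpi pi f f.
Proof.
move=> f0; set v := 2 * dotpi pi g f - dotpi pi f f.
set c := dotpi pi f f - 2 * autocov 2 - v.
apply: (@limn_eq_of_dist_le_inv _ _ _ (`|c| + 2 * (\sum_(y < n) `|g y|) ^+ 2)) => N.
rewrite var_sum_centred // second_moment_poisson.
have -> : (N%:R * v + dotpi pi f f - 2 * autocov 2 + 2 * autocov N.+2) / N.+1%:R - v
    = (c + 2 * autocov N.+2) / N.+1%:R.
  by rewrite /c -[N.+1]addn1 natrD; field; rewrite natr1 pnatr_eq0.
have inv_ge0 : 0 <= N.+1%:R^-1 :> R by rewrite invr_ge0 ler0n.
rewrite normrM (ger0_norm inv_ge0); apply: ler_wpM2r => //.
apply: le_trans (ler_normD _ _) _; apply: lerD => //.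
by rewrite normrM ger0_norm ?ler0n // ler_wpM2l // autocov_bound.
Qed.

End PoissonSolution.
End PathMoments.

Section Mixtures.
Variables (R : realType) (n : nat) (pi : 'I_n -> R) (l : nat) (a : 'I_l -> R).

Lemma mix_entry (Q : 'I_l -> 'M[R]_n) x y :
  (\sum_(k < l) a k *: Q k) x y = \sum_(k < l) a k * Q k x y.
Proof. by rewrite summxE; apply: eq_bigr => k _; rewrite mxE. Qed.

Lemma dotpi_mxact_mix (Q : 'I_l -> 'M[R]_n) h :
  dotpi pi h (mxact (\sum_(k < l) a k *: Q k) h) = \sum_(k < l) a k * dotpi pi h (mxact (Q k) h).
Proof.
rewrite /dotpi /mxact.
under eq_bigr => x _ do under eq_bigr => y _ do rewrite mix_entry mulr_suml.
under eq_bigr => x _ do rewrite exchange_big mulr_sumr.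
rewrite exchange_big /=; apply: eq_bigr => k _.
rewrite mulr_sumr; apply: eq_bigr => x _; rewrite !mulr_sumr.
by apply: eq_bigr => y _; ring.
Qed.

Lemma mix_reversible (Q : 'I_l -> 'M[R]_n) :
  (forall k, reversible pi (Q k)) -> reversible pi (\sum_(k < l) a k *: Q k).
Proof.
move=> Qr x y; rewrite !mix_entry !mulr_sumr; apply: eq_bigr => k _.
by rewrite mulrCA Qr mulrCA.
Qed.

Lemma mix_transition (Q : 'I_l -> 'M[R]_n) :
  (forall k, 0 < a k) -> \sum_(k < l) a k = 1 ->
  (forall k, is_transition (Q k)) -> is_transition (\sum_(k < l) a k *: Q k).
Proof.
move=> a_gt0 asum Qt; split=> [x y|x].
  rewrite mix_entry sumr_ge0 // => k _.
  by rewrite mulr_ge0 ?transition_ge0 ?ltW.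
under eq_bigr => y _ do rewrite mix_entry.
rewrite exchange_big /= -asum; apply: eq_bigr => k _.
by rewrite -mulr_sumr transition_sum1 ?mulr1.
Qed.

End Mixtures.

Section ReversibleSpectrum.
Variables (R : realType) (n : nat) (pi : 'I_n -> R) (B : 'M[R]_n).
Hypotheses (pipos : forall x, 0 < pi x) (Br : reversible pi B).

(* Reversibility of B is the symmetry of S = D^(1/2) B D^(-1/2), which is
   similar to B. *)
Let s x := Num.sqrt (pi x).
Let S := \matrix_(x, y) (s x * B x y / s y).

Let s_neq0 x : s x != 0. Proof. by rewrite gt_eqF // sqrtr_gt0. Qed.

Let sqr_s x : s x ^+ 2 = pi x. Proof. by rewrite sqr_sqrtr // ltW. Qed.

Let S_sym : S^T = S.
Proof.
have S_pi x y : s x * B x y / s y = pi x * B x y / (s x * s y).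
  by rewrite -sqr_s; field; rewrite !s_neq0.
by apply/matrixP => x y; rewrite !mxE !S_pi Br; congr (_ / _); apply: mulrC.
Qed.

Let eigenvalue_S lam : eigenvalue S lam -> eigenvalue B lam.
Proof.
move=> /eigenvalueP [v vS v_neq0]; apply/eigenvalueP.
exists (\row_y (v 0 y * s y)).
  apply/rowP => y; have /rowP /(_ y) := vS; rewrite !mxE => vSy.
  transitivity (s y * \sum_(x < n) v 0 x * S x y).
    by rewrite mulr_sumr; apply: eq_bigr => x _; rewrite !mxE; field; rewrite s_neq0.
  by rewrite vSy; ring.
apply: contraNneq v_neq0 => vs0; apply/eqP/rowP => y.
have /eqP := congr1 (fun A : 'rV[R]_n => A 0 y) vs0.
by rewrite !mxE mulf_eq0 (negPf (s_neq0 y)) orbF => /eqP.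
Qed.

Lemma reversible_eigen_psd : (forall lam, eigenvalue B lam -> 0 <= lam) ->
  forall h, 0 <= dotpi pi h (mxact B h).
Proof.
move=> eig_ge0 h.
have := symmx_psd S_sym (fun lam eigS => eig_ge0 lam (eigenvalue_S eigS)) (\row_x (s x * h x)).
congr (_ <= _); rewrite mxE /dotpi /mxact.
under eq_bigr => y _ do rewrite !mxE mulr_suml.
rewrite exchange_big /=; apply: eq_bigr => x _.
rewrite mulr_sumr; apply: eq_bigr => y _; rewrite !mxE -sqr_s.
by field; rewrite !s_neq0.
Qed.

End ReversibleSpectrum.

Lemma poisson_dotpi_le (R : realType) n (pi : 'I_n -> R) (P P' : 'M[R]_n) f g g' :
  (forall x, 0 < pi x) -> is_transition P -> reversible pi P ->
  (forall h, dirichlet pi P h <= dirichlet pi P' h) ->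
  (forall x, g x - mxact P g x = f x) -> (forall x, g' x - mxact P' g' x = f x) ->
  dotpi pi g' f <= dotpi pi g f.
Proof.
move=> pipos Pt Pr le_PP' hg hg'.
have Eg : dirichlet pi P g = dotpi pi g f by apply: eq_dotpi.
have Eg' : dirichlet pi P' g' = dotpi pi g' f by apply: eq_dotpi.
have cross : dotpi pi g' (fun x => g x - mxact P g x) = dotpi pi g' f.
  by apply: eq_dotpi.
have := dirichlet_ge0 Pt Pr pipos (fun x => g x - g' x).
rewrite dirichletB // cross Eg => ge0.
by have := le_PP' g'; rewrite Eg' => le; lra.
Qed.

Theorem theorem5 (R : realType) (n : nat) (pi : 'I_n -> R) (l : nat)
  (Ps Ps' : 'I_l -> 'M[R]_n) (a : 'I_l -> R) :
  is_pos_distribution pi ->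
  (forall k, is_transition (Ps k) /\ reversible pi (Ps k)) ->
  (forall k, is_transition (Ps' k) /\ reversible pi (Ps' k)) ->
  (forall k, 0 < a k) -> \sum_(k < l) a k = 1 ->
  irreducible (\sum_(k < l) a k *: Ps k) ->
  irreducible (\sum_(k < l) a k *: Ps' k) ->
  (forall k (lam : R), eigenvalue (Ps k - Ps' k) lam -> 0 <= lam) ->
  efficiency_dominates pi (\sum_(k < l) a k *: Ps' k) (\sum_(k < l) a k *: Ps k).
Proof.
move=> [pipos pisum] hP hP' a_gt0 asum irr irr' eig_ge0 f.
set P := \sum_(k < l) a k *: Ps k; set P' := \sum_(k < l) a k *: Ps' k.
have Pt : is_transition P := mix_transition a_gt0 asum (fun k => (hP k).1).
have Pr : reversible pi P := mix_reversible a (fun k => (hP k).2).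
have P't : is_transition P' := mix_transition a_gt0 asum (fun k => (hP' k).1).
have P'r : reversible pi P' := mix_reversible a (fun k => (hP' k).2).
set m := \sum_(y < n) pi y * f y; pose f0 x := f x - m.
have f00 : \sum_(x < n) pi x * f0 x = 0 := sum_pi_centred f pisum.
rewrite -(asym_var_shift Pt Pr pisum f m) -(asym_var_shift P't P'r pisum f m) -/f0.
have [g hg] := poisson_solution Pt Pr pipos pisum irr f00.
have [g' hg'] := poisson_solution P't P'r pipos pisum irr' f00.
rewrite (asym_var_poisson Pt Pr pisum hg pipos f00).
rewrite (asym_var_poisson P't P'r pisum hg' pipos f00).
suff le_g'g : dotpi pi g' f0 <= dotpi pi g f0 by lra.
apply: (poisson_dotpi_le pipos Pt Pr _ hg hg') => h.
have PP' : P - P' = \sum_(k < l) a k *: (Ps k - Ps' k).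
  by rewrite -sumrB; apply: eq_bigr => k _; rewrite scalerBr.
rewrite -subr_ge0 dirichlet_sub PP' dotpi_mxact_mix sumr_ge0 // => k _.
have rk : reversible pi (Ps k - Ps' k).
  by move=> x y; rewrite !mxE !mulrBr (hP k).2 (hP' k).2.
by rewrite mulr_ge0 ?(ltW (a_gt0 k)) ?(reversible_eigen_psd pipos rk (eig_ge0 k)).
Qed.
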